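(* Let $\kappa$ be a regular infinite cardinal, $I$ a nonempty set of players, and $(S,\Sigma_S)$ a $\kappa$-measurable space such that for all $s\neq s'$ in $S$ there is $E\in\Sigma_S$ with $s\in E$, $s'\notin E$. Let $\Omega$ be the set of $\kappa$-descriptions, $\Sigma_\Omega=\{[\varphi]:\varphi\in\Phi^\kappa\}$, and $T_i^*$, $\theta^*$ as defined in the context. Then $\langle \Omega,\Sigma_\Omega,(T_i^* )_{i\in I},\theta^*\rangle$ is a universal $\kappa$-type space on $S$ for player set $I$: it is a $\kappa$-type space, and for every $\kappa$-type space $\underline M$ on $S$ for player set $I$ there is a unique type morphism from $\underline M$ to it.
   Context: A $\kappa$-field on a nonempty set $M$ is a field $\Sigma$ of subsets of $M$ such that $\bigcap\mathcal E\in\Sigma$ whenever $\mathcal E\subseteq\Sigma$ and $|\mathcal E|<\kappa$; $(M,\Sigma)$ is then a $\kappa$-measurable space. For such a space, $\Delta^\kappa(M,\Sigma)$ denotes the set of finitely additive probability measures on $(M,\Sigma)$, endowed with the $\kappa$-field generated by the sets $\{\mu:\mu(E)\ge p\}$, $E\in\Sigma$, $p\in[0,1]$. A $\kappa$-type space on $S$ for player set $I$ is a tuple $\langle M,\Sigma,(T_i)_{i\in I},\theta\rangle$ where $M$ is a nonempty set, $\Sigma$ a $\kappa$-field on $M$, each $T_i:M\to\Delta^\kappa(M,\Sigma)$ is measurable and satisfies: for all $m\in M$ and $A\in\Sigma$, if $\{m'\in M:T_i(m')=T_i(m)\}\subseteq A$ then $T_i(m)(A)=1$; and $\theta:M\to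 S$ is $\Sigma$–$\Sigma_S$-measurable. A type morphism from $\langle M',\Sigma',(T'_i),\theta'\rangle$ to $\langle M,\Sigma,(T_i),\theta\rangle$ is a $\Sigma'$–$\Sigma$-measurable $f:M'\to M$ with $\theta'(m')=\theta(f(m'))$ and $T_i(f(m'))(E)=T'_i(m')(f^{-1}(E))$ for all $m'\in M'$, $E\in\Sigma$, $i\in I$. The set $\Phi^\kappa$ of $\kappa$-expressions is the least set such that: every $E\in\Sigma_S$ is in $\Phi^\kappa$; if $\varphi\in\Phi^\kappa$ then $\neg\varphi\in\Phi^\kappa$ and $B_i^p(\varphi)\in\Phi^\kappa$ for all $i\in I$, $p\in[0,1]$; if $\Psi\subseteq\Phi^\kappa$ is nonempty with $|\Psi|<\kappa$ then $\bigwedge_{\varphi\in\Psi}\varphi\in\Phi^\kappa$. In a $\kappa$-type space $\underline M$ define $E^{\underline M}=\theta^{-1}(E)$, $(\neg\varphi)^{\underline M}=M\setminus\varphi^{\underline M}$, $(B_i^p(\varphi))^{\underline M}=\{m:T_i(m)(\varphi^{\underline M})\ge p\}$, $(\bigwedge_{\varphi\in\Psi}\varphi)^{\underline M}=\bigcap_{\varphi\in\Psi}\varphi^{\underline M}$. The $\kappa$-description of $m\in M$ is $D(m)=\{\varphi\in\Phi^\kappa: m\in\varphi^{\underline M}\}$. $\Omega$ is the set of all $\kappa$-descriptions of all states $m$ of all $\kappa$-type spaces on $S$ for player set $I$; for $\varphi\in\Phi^\kappa$, $[\varphi]=\{\omega\in\Omega:\varphi\in\omega\}$. For $\omega\in\Omega$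 and $i\in I$, $T_i^*(\omega)$ is the function on $\Sigma_\Omega$ given by $T_i^*(\omega)([\varphi])=\sup\{p\in[0,1]:B_i^p(\varphi)\in\omega\}$ (equivalently $T_i(m)(\varphi^{\underline M})$ for any $\kappa$-type space $\underline M$ and $m\in M$ with $D(m)=\omega$), and $\theta^*(\omega)$ is the unique $s\in S$ with $s\in E$ for all $E\in\Sigma_S\cap\omega$ (equivalently $\theta(m)$ for any such $m$). *)

From Stdlib Require Import Reals ClassicalEpsilon.
From Coquelicot Require Import Coquelicot.
Open Scope R_scope.

(* ---------- Cardinals: the cardinal kappa is represented by a type K. ---------- *)

Definition card_lt (K X : Type) : Prop :=
  (exists f : X -> K, forall x y, f x = f y -> x = y) /\
  ~ (exists g : K -> X, forall x y, g x = g y -> x = y).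

Definition infinite_card (K : Type) : Prop :=
  exists f : nat -> K, forall x y, f x = f y -> x = y.

(* kappa is regular: a union of fewer than kappa sets, each of size
   less than kappa, has size less than kappa (all such sets may be taken
   as subsets of K). *)
Definition regular_card (K : Type) : Prop :=
  forall (J : K -> Prop) (A : K -> K -> Prop),
    card_lt K {j | J j} ->
    (forall j, J j -> card_lt K {k | A j k}) ->
    card_lt K {k | exists j, J j /\ A j k}.

Definition kfield (K M : Type) (Sig : (M -> Prop) -> Prop) : Prop :=
  Sig (fun _ => True) /\
  (forall A, Sig A -> Sig (fun m => ~ A m)) /\
  (forall A B, Sig A -> Sig B -> Sig (fun m => A m /\ B m)) /\
  (forall E : (M -> Prop) -> Prop,
      (forall A, E A -> Sig A) -> card_lt K {A | E A} ->
      Sig (fun m => forall A, E A -> A m)).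

Definition kmeasurable_space (K M : Type) (Sig : (M -> Prop) -> Prop) : Prop :=
  (exists m : M, True) /\ kfield K M Sig.

Definition gen_kfield (K X : Type) (G : (X -> Prop) -> Prop) (A : X -> Prop) : Prop :=
  forall Sig : (X -> Prop) -> Prop, kfield K X Sig -> (forall B, G B -> Sig B) -> Sig A.

Definition measurable_map (M N : Type) (SigM : (M -> Prop) -> Prop)
  (SigN : (N -> Prop) -> Prop) (f : M -> N) : Prop :=
  forall A, SigN A -> SigM (fun m => A (f m)).

(* A measure is a function on all subsets, normalized to be 0 off Sig,
   so that equality of measures is equality of functions. *)
Definition fa_prob (M : Type) (Sig : (M -> Prop) -> Prop) (mu : (M -> Prop) -> R) : Prop :=
  (forall A, Sig A -> 0 <= mu A) /\
  mu (fun _ => True) = 1 /\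
  (forall A B, Sig A -> Sig B -> (forall m, A m -> B m -> False) ->
     mu (fun m => A m \/ B m) = mu A + mu B) /\
  (forall A, ~ Sig A -> mu A = 0).

Definition Delta_gen (M : Type) (Sig : (M -> Prop) -> Prop)
  (B : ((M -> Prop) -> R) -> Prop) : Prop :=
  exists E p, Sig E /\ 0 <= p <= 1 /\ B = (fun mu => mu E >= p).

Definition Delta_field (K M : Type) (Sig : (M -> Prop) -> Prop) :=
  gen_kfield K ((M -> Prop) -> R) (Delta_gen M Sig).

Definition type_space (K I S : Type) (SigS : (S -> Prop) -> Prop)
  (M : Type) (Sig : (M -> Prop) -> Prop)
  (T : I -> M -> (M -> Prop) -> R) (theta : M -> S) : Prop :=
  kmeasurable_space K M Sig /\
  (forall i m, fa_prob M Sig (T i m)) /\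
  (forall i, measurable_map M ((M -> Prop) -> R) Sig (Delta_field K M Sig) (T i)) /\
  (forall i m A, Sig A -> (forall m', T i m' = T i m -> A m') -> T i m A = 1) /\
  measurable_map M S Sig SigS theta.

Definition type_morphism (I S : Type)
  (M' : Type) (Sig' : (M' -> Prop) -> Prop) (T' : I -> M' -> (M' -> Prop) -> R) (theta' : M' -> S)
  (M : Type) (Sig : (M -> Prop) -> Prop) (T : I -> M -> (M -> Prop) -> R) (theta : M -> S)
  (f : M' -> M) : Prop :=
  measurable_map M' M Sig' Sig f /\
  (forall m', theta' m' = theta (f m')) /\
  (forall m' E i, Sig E -> T i (f m') E = T' i m' (fun x => E (f x))).

(* A conjunction over a set Psi of fewer than kappa expressions is written
   as a family f indexed by a nonempty subset A of K with |A| < kappa. *)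
Inductive expr (K I S : Type) (SigS : (S -> Prop) -> Prop) : Type :=
| ePrim (E : S -> Prop) (hE : SigS E)
| eNeg (phi : @expr K I S SigS)
| eBel (i : I) (p : R) (hp : 0 <= p <= 1) (phi : @expr K I S SigS)
| eAnd (A : K -> Prop) (f : K -> @expr K I S SigS)
       (hne : exists k, A k) (hsmall : card_lt K {k | A k}).


Fixpoint sem (K I S : Type) (SigS : (S -> Prop) -> Prop)
  (M : Type) (T : I -> M -> (M -> Prop) -> R) (theta : M -> S)
  (phi : @expr K I S SigS) : M -> Prop :=
  match phi with
  | ePrim E _ => fun m => E (theta m)
  | eNeg psi => fun m => ~ sem K I S SigS M T theta psi m
  | eBel i p _ psi => fun m => T i m (sem K I S SigS M T theta psi) >= p
  | eAnd A f _ _ => fun m => forall k, A k -> sem K I S SigS M T theta (f k) m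
  end.

Definition descr (K I S : Type) (SigS : (S -> Prop) -> Prop)
  (M : Type) (T : I -> M -> (M -> Prop) -> R) (theta : M -> S) (m : M) :
  @expr K I S SigS -> Prop := fun phi => sem K I S SigS M T theta phi m.

Definition Omega (K I S : Type) (SigS : (S -> Prop) -> Prop) : Type :=
  { w : @expr K I S SigS -> Prop |
    exists (M : Type) (Sig : (M -> Prop) -> Prop)
           (T : I -> M -> (M -> Prop) -> R) (theta : M -> S) (m : M),
      type_space K I S SigS M Sig T theta /\ w = descr K I S SigS M T theta m }.

Definition bracket (K I S : Type) (SigS : (S -> Prop) -> Prop)
  (phi : @expr K I S SigS) : Omega K I S SigS -> Prop :=
  fun w => proj1_sig w phi.

Definition SigOmega (K I S : Type) (SigS : (S -> Prop) -> Prop)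
  (A : Omega K I S SigS -> Prop) : Prop :=
  exists phi : @expr K I S SigS, A = bracket K I S SigS phi.

(* T_i^*(w)([phi]) = sup{p in [0,1] : B_i^p(phi) in w}; 0 off Sigma_Omega *)
Definition Tstar (K I S : Type) (SigS : (S -> Prop) -> Prop)
  (i : I) (w : Omega K I S SigS) (A : Omega K I S SigS -> Prop) : R :=
  real (Lub_Rbar (fun p => exists (phi : @expr K I S SigS) (hp : 0 <= p <= 1),
                      A = bracket K I S SigS phi /\ proj1_sig w (eBel K I S SigS i p hp phi))).

Lemma Omega_theta_ex (K I S : Type) (SigS : (S -> Prop) -> Prop) (w : Omega K I S SigS) :
  exists s : S, forall E (hE : SigS E), proj1_sig w (ePrim K I S SigS E hE) -> E s.
Proof.
  destruct w as [w0 Hw0]; simpl; destruct Hw0 as [M [Sig [T [theta [m [_ Hw]]]]]]; subst w0.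
  exists (theta m). intros E hE H. exact H.
Qed.

(* theta^*(w) = the (unique, by separation) s lying in every E in SigS /\ w *)
Definition thetastar (K I S : Type) (SigS : (S -> Prop) -> Prop) (w : Omega K I S SigS) : S :=
  proj1_sig (constructive_indefinite_description _ (Omega_theta_ex K I S SigS w)).

(** Sending a state [m] of a κ-type space to its description [D(m)] and
    comparing satisfaction on both sides gives
    [T*_i(D(m))([φ]) = T_i(m)(φ^M)] and [θ*(D(m)) = θ(m)].  Hence [D] is a
    type morphism, and every type-space axiom for [Ω] at a point [D(m)] is
    inherited from the space [M] that point comes from.  [Σ_Ω] is a κ-field
    because fewer than κ formulas can be indexed by a subset of κ and
    conjoined.  Finally, a type morphism [g] into [Ω] preserves the
    satisfaction of every formula (by induction on the formula), so [g(m)]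
    is the description of [m]. *)

From Pilot Require Import Defs.
From Stdlib Require Import Reals ClassicalEpsilon FunctionalExtensionality
  PropExtensionality ProofIrrelevance Classical Lra.
From Coquelicot Require Import Coquelicot.
Open Scope R_scope.

Lemma pred_ext {A : Type} (P Q : A -> Prop) : (forall x, P x <-> Q x) -> P = Q.
Proof.
  intros H; apply functional_extensionality; intros x.
  apply propositional_extensionality; auto.
Qed.

Lemma sig_ext {A : Type} {P : A -> Prop} (u v : {x | P x}) :
  proj1_sig u = proj1_sig v -> u = v.
Proof. destruct u, v; simpl; intros ->. f_equal; apply proof_irrelevance. Qed.

Lemma card_lt_surj (K X Y : Type) (h : X -> Y) :
  card_lt K X -> (forall y, exists x, h x = y) -> card_lt K Y.
Proof.
  intros [[f f_inj] no_inj] h_surj.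
  destruct (choice _ h_surj) as [c hc].
  split.
  - exists (fun y => f (c y)). intros y y' e.
    apply f_inj in e. rewrite <- (hc y), <- (hc y'), e. reflexivity.
  - intros [g g_inj]. apply no_inj. exists (fun k => c (g k)). intros k k' e.
    apply g_inj. rewrite <- (hc (g k)), <- (hc (g k')), e. reflexivity.
Qed.

Lemma card_lt_bool (K : Type) : infinite_card K -> card_lt K bool.
Proof.
  intros [f f_inj]. split.
  - exists (fun b : bool => f (if b then 0%nat else 1%nat)).
    intros [] [] e; auto; apply f_inj in e; discriminate.
  - intros [g g_inj].
    assert (gf_inj : forall n n', g (f n) = g (f n') -> n = n')
      by (intros n n' e; apply f_inj, g_inj, e).
    destruct (g (f 0%nat)) eqn:e0, (g (f 1%nat)) eqn:e1, (g (f 2%nat)) eqn:e2;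
      first [ assert (0 = 1)%nat by (apply gf_inj; congruence)
            | assert (0 = 2)%nat by (apply gf_inj; congruence)
            | assert (1 = 2)%nat by (apply gf_inj; congruence) ]; discriminate.
Qed.

Lemma meet_closed_indexed (K M X : Type) (Sig : (M -> Prop) -> Prop)
  (F : X -> M -> Prop) :
  (forall E : (M -> Prop) -> Prop, (forall A, E A -> Sig A) ->
     card_lt K {A | E A} -> Sig (fun m => forall A, E A -> A m)) ->
  card_lt K X -> (forall x, Sig (F x)) -> Sig (fun m => forall x, F x m).
Proof.
  intros meet hX hF.
  replace (fun m => forall x, F x m)
    with (fun m => forall A, (exists x, A = F x) -> A m).
  - apply meet.
    + intros A [x ->]; apply hF.
    + apply (card_lt_surj K X _ (fun x => exist _ (F x) (ex_intro _ x eq_refl)) hX).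
      intros [A [x ->]]. exists x. reflexivity.
  - apply pred_ext; intro m; split.
    + intros h x. apply h. eauto.
    + intros h A [x ->]. apply h.
Qed.

Lemma kfield_intro (K M : Type) (Sig : (M -> Prop) -> Prop) :
  infinite_card K ->
  Sig (fun _ => True) ->
  (forall A, Sig A -> Sig (fun m => ~ A m)) ->
  (forall E : (M -> Prop) -> Prop, (forall A, E A -> Sig A) ->
     card_lt K {A | E A} -> Sig (fun m => forall A, E A -> A m)) ->
  kfield K M Sig.
Proof.
  intros K_infinite full compl meet.
  split; [exact full | split; [exact compl | split; [| exact meet]]].
  intros A B hA hB.
  replace (fun m => A m /\ B m) with (fun m => forall b : bool, (if b then A else B) m).
  - apply (meet_closed_indexed K M bool Sig _ meet (card_lt_bool K K_infinite)).
    intros []; assumption.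
  - apply pred_ext; intro m; split.
    + intros h. exact (conj (h true) (h false)).
    + intros [a b] []; assumption.
Qed.

Lemma kfield_bigcap (K M X : Type) (Sig : (M -> Prop) -> Prop) (F : X -> M -> Prop) :
  kfield K M Sig -> card_lt K X -> (forall x, Sig (F x)) ->
  Sig (fun m => forall x, F x m).
Proof. intros (_ & _ & _ & meet). exact (meet_closed_indexed K M X Sig F meet). Qed.

Lemma kfield_union (K M : Type) (Sig : (M -> Prop) -> Prop) (A B : M -> Prop) :
  kfield K M Sig -> Sig A -> Sig B -> Sig (fun m => A m \/ B m).
Proof.
  intros (_ & compl & inter & _) hA hB.
  replace (fun m => A m \/ B m) with (fun m => ~ (~ A m /\ ~ B m)).
  - apply compl, inter; apply compl; assumption.
  - apply pred_ext; intro m. pose proof (classic (A m)). tauto.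
Qed.

Lemma kfield_preimage (K M N : Type) (SigM : (M -> Prop) -> Prop) (f : M -> N) :
  kfield K M SigM -> kfield K N (fun B => SigM (fun m => B (f m))).
Proof.
  intros KM. pose proof KM as (full & compl & inter & _).
  split; [exact full |].
  split; [intros A hA; exact (compl _ hA) |].
  split; [intros A B hA hB; exact (inter _ _ hA hB) |].
  intros E hE hc.
  replace (fun m => forall A, E A -> A (f m))
    with (fun m => forall a : {A | E A}, proj1_sig a (f m)).
  - apply (kfield_bigcap K M _ SigM _ KM hc). intros [A hA]. exact (hE A hA).
  - apply pred_ext; intro m; split.
    + intros h A hA. exact (h (exist _ A hA)).
    + intros h [A hA]. exact (h A hA).
Qed.

Lemma measurable_to_generated (K M N : Type) (SigM : (M -> Prop) -> Prop)
  (G : (N -> Prop) -> Prop) (f : M -> N) :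
  kfield K M SigM -> (forall B, G B -> SigM (fun m => B (f m))) ->
  measurable_map M N SigM (gen_kfield K N G) f.
Proof. intros KM hG A hA. exact (hA _ (kfield_preimage K M N SigM f KM) hG). Qed.

Lemma fa_prob_range (K M : Type) (Sig : (M -> Prop) -> Prop) mu A :
  kfield K M Sig -> fa_prob M Sig mu -> Sig A -> 0 <= mu A <= 1.
Proof.
  intros (_ & compl & _) (nonneg & total & additive & _) hA.
  pose proof (additive A (fun m => ~ A m) hA (compl _ hA) (fun m a na => na a)) as h.
  cbv beta in h.
  replace (fun m => A m \/ ~ A m) with (fun _ : M => True) in h
    by (apply pred_ext; intro m; pose proof (classic (A m)); tauto).
  rewrite total in h.
  pose proof (nonneg _ hA). pose proof (nonneg _ (compl _ hA)). lra.
Qed.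

Definition dirac_unit (A : unit -> Prop) : R :=
  if excluded_middle_informative (A tt) then 1 else 0.

Lemma point_type_space (K I S : Type) (SigS : (S -> Prop) -> Prop) (s : S) :
  type_space K I S SigS unit (fun _ => True) (fun _ _ => dirac_unit) (fun _ => s).
Proof.
  unfold dirac_unit.
  split; [split; [exists tt; auto | repeat split; intros; exact Logic.I] |].
  split; [| split; [| split]].
  - intros i m. split; [| split; [| split]].
    + intros A _. destruct (excluded_middle_informative _); lra.
    + destruct (excluded_middle_informative _) as [_ | n]; [reflexivity | tauto].
    + intros A B _ _ disj.
      destruct (excluded_middle_informative (A tt)), (excluded_middle_informative (B tt)),
        (excluded_middle_informative (A tt \/ B tt)); try lra; exfalso; firstorder.
    + intros A n. exfalso. auto.
  - intros i A _. exact Logic.I.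
  - intros i m A _ h. specialize (h tt eq_refl).
    destruct (excluded_middle_informative (A tt)); tauto.
  - intros A _. exact Logic.I.
Qed.

Section Canonical.

Variables (K I S : Type) (SigS : (S -> Prop) -> Prop).
Hypothesis S_kmeasurable : kmeasurable_space K S SigS.
Hypothesis SigS_separating : forall s s' : S, s <> s' -> exists E, SigS E /\ E s /\ ~ E s'.
Hypothesis K_infinite : infinite_card K.

Local Notation formula := (Defs.expr K I S SigS).
Local Notation Ω := (Omega K I S SigS).
Local Notation "⟦ phi ⟧" := (bracket K I S SigS phi) (phi at level 200).
Local Notation Tstar := (Tstar K I S SigS).
Local Notation thetastar := (thetastar K I S SigS).
Local Notation SigOmega := (SigOmega K I S SigS).

Section Space.

Variables (M : Type) (Sig : (M -> Prop) -> Prop)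
  (T : I -> M -> (M -> Prop) -> R) (theta : M -> S).
Hypothesis HM : type_space K I S SigS M Sig T theta.

Local Notation semM := (sem K I S SigS M T theta).

Lemma sem_measurable (phi : formula) : Sig (semM phi).
Proof.
  pose proof HM as ((_ & KM) & _ & T_meas & _ & theta_meas).
  induction phi as [E hE | phi IH | i p hp phi IH | A f IH hne hs]; simpl.
  - exact (theta_meas E hE).
  - exact (proj1 (proj2 KM) _ IH).
  - apply (T_meas i (fun mu => mu (semM phi) >= p)).
    intros Sig' _ hG. apply hG. exists (semM phi), p. auto.
  - replace (fun m => forall k, A k -> semM (f k) m)
      with (fun m => forall k : {k | A k}, semM (f (proj1_sig k)) m).
    + apply (kfield_bigcap K M _ Sig _ KM hs). intros [k hk]. apply IH.
    + apply pred_ext; intro m; split.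
      * intros h k hk. exact (h (exist _ k hk)).
      * intros h [k hk]. exact (h k hk).
Qed.

Definition descr_map (m : M) : Ω :=
  exist _ (descr K I S SigS M T theta m)
    (ex_intro _ M (ex_intro _ Sig (ex_intro _ T (ex_intro _ theta
      (ex_intro _ m (conj HM eq_refl)))))).

Lemma sem_of_bracket_eq (phi : formula) (G : Ω -> Prop) :
  ⟦phi⟧ = G -> semM phi = (fun m => G (descr_map m)).
Proof. intros <-. reflexivity. Qed.

Lemma Tstar_descr_map i m (phi : formula) :
  Tstar i (descr_map m) ⟦phi⟧ = T i m (semM phi).
Proof.
  pose proof HM as ((_ & KM) & T_prob & _).
  pose proof (fa_prob_range K M Sig _ _ KM (T_prob i m) (sem_measurable phi)) as range.
  unfold Defs.Tstar.
  rewrite (is_lub_Rbar_unique _ (Finite (T i m (semM phi)))); [reflexivity |].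
  split.
  - intros p (psi & hp & e & h_psi). change (T i m (semM psi) >= p) in h_psi. simpl.
    rewrite (sem_of_bracket_eq psi _ (eq_sym e)) in h_psi. apply Rge_le, h_psi.
  - intros b hb. apply hb. exists phi, range. split; [reflexivity | apply Rge_refl].
Qed.

Lemma Tstar_descr_map_congr i m m' :
  T i m' = T i m -> Tstar i (descr_map m') = Tstar i (descr_map m).
Proof.
  intros e. apply functional_extensionality; intro B.
  unfold Defs.Tstar; simpl. rewrite e. reflexivity.
Qed.

Lemma thetastar_descr_map m : thetastar (descr_map m) = theta m.
Proof.
  unfold Defs.thetastar.
  destruct (constructive_indefinite_description _ _) as [s hs]; simpl.
  apply NNPP; intro n.
  destruct (SigS_separating (theta m) s (not_eq_sym n)) as (E & hE & E_theta & not_E_s).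
  exact (not_E_s (hs E hE E_theta)).
Qed.

Lemma descr_map_morphism :
  type_morphism I S M Sig T theta Ω SigOmega Tstar thetastar descr_map.
Proof.
  split; [| split].
  - intros A [phi ->]. exact (sem_measurable phi).
  - intros m. symmetry. apply thetastar_descr_map.
  - intros m E i [phi ->]. apply Tstar_descr_map.
Qed.

End Space.

Lemma Omega_rep (w : Ω) :
  exists M Sig T theta (HM : type_space K I S SigS M Sig T theta) m,
    w = descr_map M Sig T theta HM m.
Proof.
  destruct w as [w (M & Sig & T & theta & m & HM & e)].
  exists M, Sig, T, theta, HM, m. apply sig_ext. exact e.
Qed.

Lemma sat_prim (w : Ω) E hE : ⟦ePrim K I S SigS E hE⟧ w <-> E (thetastar w).
Proof.
  destruct (Omega_rep w) as (M & Sig & T & theta & HM & m & ->).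
  rewrite thetastar_descr_map. apply iff_refl.
Qed.

Lemma sat_neg (w : Ω) phi : ⟦eNeg K I S SigS phi⟧ w <-> ~ ⟦phi⟧ w.
Proof.
  destruct (Omega_rep w) as (M & Sig & T & theta & HM & m & ->). apply iff_refl.
Qed.

Lemma sat_bel (w : Ω) i p hp phi :
  ⟦eBel K I S SigS i p hp phi⟧ w <-> Tstar i w ⟦phi⟧ >= p.
Proof.
  destruct (Omega_rep w) as (M & Sig & T & theta & HM & m & ->).
  rewrite Tstar_descr_map. apply iff_refl.
Qed.

Lemma sat_and (w : Ω) A f hne hs :
  ⟦eAnd K I S SigS A f hne hs⟧ w <-> forall k, A k -> ⟦f k⟧ w.
Proof.
  destruct (Omega_rep w) as (M & Sig & T & theta & HM & m & ->). apply iff_refl.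
Qed.

Lemma exists_bigand (X : Type) (F : X -> formula) :
  card_lt K X -> X -> exists chi, forall w, ⟦chi⟧ w <-> forall x, ⟦F x⟧ w.
Proof.
  intros hX x0. pose proof hX as [[j j_inj] _].
  assert (hG : forall k, exists phi, forall x, j x = k -> F x = phi).
  { intro k. destruct (classic (exists x, j x = k)) as [[x <-] | none].
    - exists (F x). intros x' e. apply j_inj in e. subst. reflexivity.
    - exists (F x0). intros x e. exfalso. eauto. }
  destruct (choice _ hG) as [G hFG].
  assert (hne : exists k x, j x = k) by (exists (j x0), x0; reflexivity).
  assert (hs : card_lt K {k | exists x, j x = k}).
  { apply (card_lt_surj K X _ (fun x => exist _ (j x) (ex_intro _ x eq_refl)) hX).
    intros [k [x <-]]. exists x. reflexivity. }
  exists (eAnd K I S SigS _ G hne hs). intro w. rewrite sat_and. split.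
  - intros h x. rewrite (hFG (j x) x eq_refl). apply h. eauto.
  - intros h k [x <-]. rewrite <- (hFG (j x) x eq_refl). apply h.
Qed.

Lemma SigOmega_full : SigOmega (fun _ => True).
Proof.
  pose proof S_kmeasurable as (_ & full & _).
  exists (ePrim K I S SigS (fun _ => True) full).
  apply pred_ext; intro w. rewrite sat_prim. tauto.
Qed.

Lemma SigOmega_compl (A : Ω -> Prop) : SigOmega A -> SigOmega (fun w => ~ A w).
Proof.
  intros [phi ->]. exists (eNeg K I S SigS phi).
  apply pred_ext; intro w. rewrite sat_neg. tauto.
Qed.

Lemma SigOmega_bigcap (E : (Ω -> Prop) -> Prop) :
  (forall A, E A -> SigOmega A) -> card_lt K {A | E A} ->
  SigOmega (fun w => forall A, E A -> A w).
Proof.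
  intros hE hc. destruct (classic (exists A, E A)) as [[A0 hA0] | empty].
  - destruct (choice (fun (a : {A | E A}) phi => proj1_sig a = ⟦phi⟧)
                     (fun a => hE _ (proj2_sig a))) as [rep h_rep].
    destruct (exists_bigand _ rep hc (exist _ A0 hA0)) as [chi h_chi].
    exists chi. apply pred_ext; intro w. rewrite h_chi. split.
    + intros h a. rewrite <- h_rep. apply h, proj2_sig.
    + intros h A hA. specialize (h (exist _ A hA)). rewrite <- h_rep in h. exact h.
  - replace (fun w => forall A, E A -> A w) with (fun _ : Ω => True)
      by (apply pred_ext; firstorder).
    exact SigOmega_full.
Qed.

Lemma SigOmega_kfield : kfield K Ω SigOmega.
Proof.
  exact (kfield_intro K Ω SigOmega K_infinite SigOmega_full SigOmega_compl SigOmega_bigcap).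
Qed.

Lemma Tstar_not_bracket i w (A : Ω -> Prop) : ~ SigOmega A -> Tstar i w A = 0.
Proof.
  intros nA. unfold Defs.Tstar.
  (* the supremum of the empty set is [m_infty], and [real m_infty = 0] *)
  rewrite (is_lub_Rbar_unique _ m_infty); [reflexivity |].
  split.
  - intros p (phi & hp & e & _). exfalso. apply nA. exists phi. exact e.
  - intros b _. destruct b; simpl; trivial.
Qed.

Lemma Tstar_fa_prob i (w : Ω) : fa_prob Ω SigOmega (Tstar i w).
Proof.
  destruct (Omega_rep w) as (M & Sig & T & theta & HM & m & ->).
  pose proof HM as (_ & T_prob & _).
  destruct (T_prob i m) as (nonneg & total & additive & _).
  split; [| split; [| split]].
  - intros A [phi ->]. rewrite Tstar_descr_map. apply nonneg, sem_measurable, HM.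
  - destruct SigOmega_full as [phi e].
    rewrite e, Tstar_descr_map, (sem_of_bracket_eq _ _ _ _ HM phi _ (eq_sym e)).
    exact total.
  - intros A B [phi ->] [psi ->] disj.
    destruct (kfield_union K Ω SigOmega _ _ SigOmega_kfield
                (ex_intro _ phi eq_refl) (ex_intro _ psi eq_refl)) as [chi e].
    rewrite e, !Tstar_descr_map, (sem_of_bracket_eq _ _ _ _ HM chi _ (eq_sym e)).
    exact (additive _ _ (sem_measurable _ _ _ _ HM phi) (sem_measurable _ _ _ _ HM psi)
             (fun x => disj (descr_map M Sig T theta HM x))).
  - intros A nA. apply Tstar_not_bracket, nA.
Qed.

Lemma Tstar_measurable i :
  measurable_map Ω _ SigOmega (Delta_field K Ω SigOmega) (Tstar i).
Proof.
  apply measurable_to_generated; [exact SigOmega_kfield |].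
  intros B (E & p & [phi ->] & hp & ->). exists (eBel K I S SigS i p hp phi).
  apply pred_ext; intro w. rewrite sat_bel. tauto.
Qed.

Lemma Tstar_introspective i (w : Ω) (A : Ω -> Prop) :
  SigOmega A -> (forall w', Tstar i w' = Tstar i w -> A w') -> Tstar i w A = 1.
Proof.
  intros [phi ->] hA.
  destruct (Omega_rep w) as (M & Sig & T & theta & HM & m & ->).
  pose proof HM as (_ & _ & _ & T_introspective & _).
  rewrite Tstar_descr_map. apply T_introspective; [apply sem_measurable, HM |].
  intros m' e. exact (hA _ (Tstar_descr_map_congr _ _ _ _ HM i m m' e)).
Qed.

Lemma thetastar_measurable : measurable_map Ω S SigOmega SigS thetastar.
Proof.
  intros E hE. exists (ePrim K I S SigS E hE).
  apply pred_ext; intro w. rewrite sat_prim. tauto.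
Qed.

Lemma Omega_type_space : type_space K I S SigS Ω SigOmega Tstar thetastar.
Proof.
  destruct S_kmeasurable as [[s _] _].
  split; [split; [| exact SigOmega_kfield] |].
  - exists (descr_map _ _ _ _ (point_type_space K I S SigS s) tt). exact Logic.I.
  - split; [exact Tstar_fa_prob |].
    split; [exact Tstar_measurable |].
    split; [exact Tstar_introspective | exact thetastar_measurable].
Qed.

Section Universality.

Variables (M : Type) (Sig : (M -> Prop) -> Prop)
  (T : I -> M -> (M -> Prop) -> R) (theta : M -> S).
Hypothesis HM : type_space K I S SigS M Sig T theta.

Local Notation semM := (sem K I S SigS M T theta).

Lemma morphism_preserves_sat (g : M -> Ω) :
  type_morphism I S M Sig T theta Ω SigOmega Tstar thetastar g ->
  forall phi m, ⟦phi⟧ (g m) <-> semM phi m.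
Proof.
  intros (_ & g_theta & g_T) phi.
  induction phi as [E hE | phi IH | i p hp phi IH | A f IH hne hs]; intro m.
  - rewrite sat_prim, <- g_theta. apply iff_refl.
  - rewrite sat_neg, IH. apply iff_refl.
  - rewrite sat_bel, (g_T m _ i (ex_intro _ phi eq_refl)).
    replace (fun x => ⟦phi⟧ (g x)) with (semM phi)
      by (apply pred_ext; intro x; symmetry; apply IH).
    apply iff_refl.
  - rewrite sat_and. simpl. split; intros h k hk; apply IH; auto.
Qed.

Lemma descr_map_universal :
  exists! f : M -> Ω, type_morphism I S M Sig T theta Ω SigOmega Tstar thetastar f.
Proof.
  exists (descr_map M Sig T theta HM). split; [exact (descr_map_morphism _ _ _ _ HM) |].
  intros g hg. apply functional_extensionality; intro m.
  apply sig_ext, pred_ext; intro phi. symmetry.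
  exact (morphism_preserves_sat g hg phi m).
Qed.

End Universality.

End Canonical.

Theorem theorem1 (K I S : Type) (SigS : (S -> Prop) -> Prop) :
  infinite_card K -> regular_card K ->
  (exists i : I, True) ->
  kmeasurable_space K S SigS ->
  (forall s s' : S, s <> s' -> exists E, SigS E /\ E s /\ ~ E s') ->
  type_space K I S SigS (Omega K I S SigS) (SigOmega K I S SigS)
             (Tstar K I S SigS) (thetastar K I S SigS) /\
  (forall (M : Type) (Sig : (M -> Prop) -> Prop)
          (T : I -> M -> (M -> Prop) -> R) (theta : M -> S),
     type_space K I S SigS M Sig T theta ->
     exists! f : M -> Omega K I S SigS,
       type_morphism I S M Sig T theta
                     (Omega K I S SigS) (SigOmega K I S SigS)
                     (Tstar K I S SigS) (thetastar K I S SigS) f).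
Proof.
  intros K_infinite _ _ S_kmeasurable SigS_separating.
  split.
  - exact (Omega_type_space K I S SigS S_kmeasurable SigS_separating K_infinite).
  - intros M Sig T theta HM.
    exact (descr_map_universal K I S SigS SigS_separating M Sig T theta HM).
Qed.
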